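(* Let $H$ be a binary tree based graph and $Z$ a uniform read-$d$-times NBP computing $\phi_H$. Let $X\subseteq V(Z)$ separate subsets $Y_1,Y_2$ of ${\bf Roots}(H)$, and let $M$ be a pseudomatching of $H$ between $Y_1$ and $Y_2$. Then for every assignment $S$ (set of literals) to all variables of $V(H)\setminus\bigcup M$ there is $\varphi\in{\bf CNF}(M)$ such that for every computational path $P$ of $Z$ passing through all vertices of $X$ with $S\subseteq A(P)$, the assignment $A(P)$ satisfies $\varphi$.
   Context: A rooted tree is extended if none of its leaves has a sibling. A graph $H$ is a binary tree based graph if it is the edge-disjoint union of extended rooted trees $T_1,\dots,T_m$ with roots $t_1,\dots,t_m$ (forming ${\bf Roots}(H)$) such that every leaf of some $T_i$ is a leaf of exactly two of the trees, and any two trees have at most one common vertex, which is a leaf of both. $T_i,T_j$ are adjacent if they share a leaf $\ell_{i,j}$; $P_{i,j}$ is the path between $t_i$ and $t_j$ in $T_i\cup T_j$; $P^{1/2}_{i\to j}$ is the path in $T_i$ from $t_i$ to $\ell_{i,j}$. A pseudoedge is a pair $\{t_i,t_j\}$ with $T_i,T_j$ adjacent; a pseudomatching is a set of pairwise disjoint pseudoedges, between disjoint $U,V$ if each has one end in each; $\bigcup M$ is the set of ends of pseudoedges of $M$. $\phi_H$ is the CNF on variables $V(H)$ with a clause $C_{i,j}$ (positive literals of $V(P_{i,j})$) for each pseudoedge. ${\bf CNF}(M)$ is the set of CNFs consisting, for each $\{t_i,t_j\}\in M$, of one clause that is either the disjunction of positive literals of $V(P^{1/2}_{i\to j})$ or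 of $V(P^{1/2}_{j\to i})$. An NBP $Z$ is a directed acyclic multigraph with one source and one sink, some edges labelled with literals. A source-sink path is computational if no variable occurs on it with both signs; $A(P)$ is its set of literals. $Z$ computes the function whose satisfying assignments are the total assignments $S$ with $A(P)\subseteq S$ for some computational path $P$. Read-$d$-times: each variable labels at most $d$ edges of each source-sink path; uniform: exactly $d$. A partition of a path $P$ is a sequence $P_1,\dots,P_c$ of subpaths with $P_1$ a prefix, $P_c$ a suffix, and the first vertex of $P_i$ equal to the last vertex of $P_{i-1}$; the set $X$ of the ends of $P_1,\dots,P_{c-1}$ generates it. $X\subseteq V(Z)$ not containing source or sink separates disjoint variable sets $Y_1,Y_2$ if there is a computational path $P$ through all vertices of $X$ such that in the partition $P_1,\dots,P_{|X|+1}$ generated by $X$ on $P$, either variables of $Y_1$ label edges only of odd-indexed $P_i$ and variables of $Y_2$ only of even-indexed $P_i$, or vice versa. *)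

From mathcomp Require Import all_boot.
Set Implicit Arguments.
Unset Strict Implicit.
Unset Printing Implicit Defensive.

(* The vertex type V is the vertex set V(H) (see is_btbg: the trees    *)
(* cover V).  Rooted tree T_i is given by its vertex set, its root and *)
(* a parent function; its edges are {v, par v} for non-root v.          *)
Record btbg (V : finType) := BTBG {
  ntrees : nat;
  tverts : 'I_ntrees -> {set V};
  troot  : 'I_ntrees -> V;
  tpar   : 'I_ntrees -> V -> V }.

Section BTBG.
Variables (V : finType) (H : btbg V).
Local Notation T := 'I_(ntrees H).

Definition pstep (i : T) : rel V :=
  fun a b => [&& a \in tverts i, a != troot i & b == tpar i a].

Definition is_rooted_tree (i : T) : Prop :=
  [/\ troot i \in tverts i,
      forall v, v \in tverts i -> v != troot i -> tpar i v \in tverts i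
    & forall v, v \in tverts i -> connect (pstep i) v (troot i)].

Definition tedges (i : T) : {set {set V}} :=
  [set [set v; tpar i v] | v in tverts i :\ troot i].

Definition children (i : T) (v : V) : {set V} :=
  [set u in tverts i :\ troot i | tpar i u == v].

Definition leaf (i : T) (v : V) : bool :=
  (v \in tverts i) && (children i v == set0).

Definition extended (i : T) : Prop :=
  forall l u, leaf i l -> l != troot i ->
    u \in tverts i -> u != troot i -> tpar i u = tpar i l -> u = l.

Definition is_btbg : Prop :=
  [/\ (forall i, is_rooted_tree i /\ extended i),
      (forall i j, i != j -> [disjoint tedges i & tedges j]),
      (forall v : V, exists i : T, v \in tverts i),
      (forall i l, leaf i l -> #|[set j | leaf j l]| = 2)
    & (forall i j v, i != j -> v \in tverts i -> v \in tverts j ->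
          [/\ leaf i v, leaf j v &
              forall w, w \in tverts i -> w \in tverts j -> w = v])].

Definition Roots : {set V} := [set troot i | i : T].

Definition adjacent (i j : T) : bool :=
  (i != j) && [exists l, leaf i l && leaf j l].

(* V(P^{1/2}_{i->j}): vertices of the path in T_i from t_i to l_{i,j},
   i.e. l_{i,j} and its ancestors in T_i *)
Definition halfpath (i j : T) : {set V} :=
  [set u | [exists l, [&& leaf i l, leaf j l & connect (pstep i) l u]]].

(* V(P_{i,j}) : path between t_i and t_j in T_i u T_j *)
Definition Ppath (i j : T) : {set V} := halfpath i j :|: halfpath j i.

(* CNFs are sets of clauses; a clause (all literals positive) is given
   by its set of variables. *)
Definition phiH : {set {set V}} := [set Ppath e.1 e.2 | e in [pred e : T * T | adjacent e.1 e.2]].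

(* pseudomatchings: pseudoedges {t_i,t_j} are represented by pairs of
   tree indices (i,j), oriented so that t_i is the end in Y1 *)
Definition pseudomatching_between (M : {set T * T}) (Y1 Y2 : {set V}) : Prop :=
  (forall e, e \in M -> [&& adjacent e.1 e.2, troot e.1 \in Y1 & troot e.2 \in Y2])
  /\ (forall e e', e \in M -> e' \in M -> e != e' ->
        [disjoint [set troot e.1; troot e.2] & [set troot e'.1; troot e'.2]]).

Definition bigcupM (M : {set T * T}) : {set V} :=
  [set troot e.1 | e in M] :|: [set troot e.2 | e in M].

Definition CNFM (M : {set T * T}) : {set {set {set V}}} :=
  [set phi | [exists c : {ffun T * T -> bool},
     phi == [set (if c e then halfpath e.1 e.2 else halfpath e.2 e.1) | e in M]]].

End BTBG.

Definition satisfies (V : finType) (L : {set V * bool}) (phi : {set {set V}}) : Prop :=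
  forall C, C \in phi -> exists2 u, u \in C & (u, true) \in L.

Definition assignment_on (V : finType) (S : {set V * bool}) (U : {set V}) : Prop :=
  (forall x b, (x, b) \in S -> x \in U) /\
  (forall x, x \in U -> ((x, true) \in S) (+) ((x, false) \in S)).

(* Literals are pairs (x, b): b = true positive, b = false negative.   *)
Record nbp (V : finType) := NBP {
  nvert : finType;
  nedge : finType;
  ntail : nedge -> nvert;
  nhead : nedge -> nvert;
  nlab  : nedge -> option (V * bool);
  nsrc  : nvert;
  nsnk  : nvert }.
Arguments ntail {V n} _.
Arguments nhead {V n} _.
Arguments nlab {V n} _.

Section NBP.
Variables (V : finType) (Z : nbp V).

Fixpoint walk (u v : nvert Z) (p : seq (nedge Z)) : bool :=
  match p with
  | [::] => u == v
  | e :: p' => (ntail e == u) && walk (nhead e) v p'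
  end.

Definition is_nbp : Prop :=
  [/\ (forall u p, walk u u p -> p = [::]),
      (forall w, (forall e, nhead e != w) <-> w = nsrc Z)
    & (forall w, (forall e, ntail e != w) <-> w = nsnk Z)].

Definition ss_path (p : seq (nedge Z)) : bool := walk (nsrc Z) (nsnk Z) p.

Definition labvar (e : nedge Z) : option V := omap fst (nlab e).

Definition lits (p : seq (nedge Z)) : {set V * bool} :=
  [set l | has (fun e => nlab e == Some l) p].

Definition computational (p : seq (nedge Z)) : bool :=
  [forall x : V, ~~ (((x, true) \in lits p) && ((x, false) \in lits p))].

(* Z computes the function whose satisfying (total) assignments are
   sigma; a total assignment is seen as the set of literals
   [set (x, sigma x) | x]. *)
Definition computes (phi : {set {set V}}) : Prop :=
  forall sigma : V -> bool,
    satisfies [set (x, sigma x) | x : V] phi <->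
    exists p, [/\ ss_path p, computational p & lits p \subset [set (x, sigma x) | x : V]].

Definition uniform_read (d : nat) : Prop :=
  forall p, ss_path p -> forall x : V, count (fun e => labvar e == Some x) p = d.

Definition path_verts (p : seq (nedge Z)) : seq (nvert Z) := nsrc Z :: map nhead p.

(* In the partition of P generated by X, edge number k (from 0) of P,
   going from vertex v_k to v_(k+1), lies in the part of index
   1 + #{ j <= k | v_j \in X }. *)
Definition part_index (X : {set nvert Z}) (p : seq (nedge Z)) (k : nat) : nat :=
  (count (fun e => ntail e \in X) (take k.+1 p)).+1.

Definition odd_even_parts (X : {set nvert Z}) (p : seq (nedge Z)) (Ya Yb : {set V}) : Prop :=
  forall k e x, onth p k = Some e -> labvar e = Some x ->
    (x \in Ya -> odd (part_index X p k)) /\ (x \in Yb -> ~~ odd (part_index X p k)).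

Definition separates (X : {set nvert Z}) (Y1 Y2 : {set V}) : Prop :=
  [/\ [disjoint Y1 & Y2], nsrc Z \notin X, nsnk Z \notin X &
      exists p, [/\ ss_path p, computational p,
                    {subset X <= path_verts p} &
                    odd_even_parts X p Y1 Y2 \/ odd_even_parts X p Y2 Y1]].

End NBP.

(* Suppose that for a pseudoedge {t_i, t_j} of M neither half-path clause is
   forced: some path p1 through X extending S has no positive literal on
   P^{1/2}_{i->j}, and some such p2 none on P^{1/2}_{j->i}.  Since Z is acyclic,
   paths through all of X meet X in the same order, so the parts of p1 of one
   parity and the parts of p2 of the other parity glue into a source-sink path
   R.  Uniform reading makes the odd/even separation of Y1 and Y2 hold on every
   path through X, so R reads Y1-variables only from p1, Y2-variables only from
   p2, and all other variables are fixed by S.  Hence R is computational and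
   sets a positive literal on P_{i,j}.  A root other than t_j on P_{i,j} lies
   on P^{1/2}_{i->j} (within T_j it can only be the leaf shared with T_i), so
   that literal contradicts the choice of p1 or of p2. *)

From mathcomp Require Import all_boot zify.
From Stdlib Require Import Classical ClassicalEpsilon.
Set Implicit Arguments.
Unset Strict Implicit.
Unset Printing Implicit Defensive.

Section Walks.
Variables (V : finType) (Z : nbp V).
Implicit Types (u v w y : nvert Z) (e : nedge Z) (p q : seq (nedge Z)).

Definition acyclic : Prop := forall u p, walk u u p -> p = [::].

Lemma is_nbp_acyclic : is_nbp Z -> acyclic.
Proof. by case. Qed.

Lemma walk_trans u w v a b : walk u w a -> walk w v b -> walk u v (a ++ b).
Proof.
elim: a u => [|e a IHa] u /=; first by move=> /eqP ->.
by case/andP=> -> /IHa; apply.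
Qed.

Lemma walk_verts u v p : walk u v p -> u :: map nhead p = rcons (map ntail p) v.
Proof.
elim: p u => [|e p IHp] u /=; first by move=> /eqP ->.
by case/andP=> /eqP -> /IHp ->.
Qed.

Lemma walk_prefix u v y p :
  walk u v p -> y \in u :: map nhead p -> exists g, walk u y g.
Proof.
elim: p u => [|e p IHp] u /=.
  by move=> _; rewrite mem_seq1 => /eqP ->; exists [::]; rewrite /= eqxx.
case/andP=> /eqP Te Wp; rewrite in_cons => /orP [/eqP ->|/(IHp _ Wp) [g Wg]].
  by exists [::]; rewrite /= eqxx.
by exists (e :: g); rewrite /= Te eqxx.
Qed.

Lemma walk_tails_prefix u v y p :
  walk u v p -> y \in map ntail p -> exists g, walk u y g.
Proof.
by move=> Wp Hy; apply: (walk_prefix Wp); rewrite (walk_verts Wp) mem_rcons inE Hy orbT.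
Qed.

Lemma acyclic_tails_notin u w v e a b :
  acyclic -> walk u w (e :: a) -> walk w v b -> u \notin map ntail b.
Proof.
move=> acyc Wa Wb; apply/negP => /(walk_tails_prefix Wb) [g Wg].
by have := acyc _ _ (walk_trans Wa Wg).
Qed.

Lemma ss_path_verts_tails p x :
  ss_path p -> x \in path_verts p -> x != nsnk Z -> x \in map ntail p.
Proof.
move=> Wp; rewrite /path_verts (walk_verts Wp) mem_rcons inE.
by case/orP=> [/eqP ->|//]; rewrite eqxx.
Qed.

Definition label_free (Y : {set V}) (s : seq (nedge Z)) : Prop :=
  forall e x, e \in s -> labvar e = Some x -> x \notin Y.

Lemma label_free_count Y s x :
  label_free Y s -> x \in Y -> count (fun e => labvar e == Some x) s = 0.
Proof.
move=> Ys xY; apply/eqP; rewrite eqn0Ngt -has_count; apply/hasPn => e es.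
by apply/negP => /eqP /(Ys _ _ es); rewrite xY.
Qed.

Definition hits (p : seq (nedge Z)) (C : {set V}) : Prop :=
  exists2 u, u \in C & (u, true) \in lits p.

Lemma computes_satisfies phi p :
  computes Z phi -> ss_path p -> computational p -> satisfies (lits p) phi.
Proof.
move=> Zphi Wp Cp; pose sigma x := (x, true) \in lits p.
have /Zphi sat : exists p, [/\ ss_path p, computational p &
    lits p \subset [set (x, sigma x) | x : V]].
  exists p; split=> //; apply/subsetP => -[x b] Hx; apply/imsetP; exists x => //.
  rewrite /sigma; case: b Hx => [-> //|Hf]; case Ht: ((x, true) \in lits p) => //.
  by move/forallP: Cp => /(_ x); rewrite Ht Hf.
move=> C /sat [u Cu /imsetP [x _ [<- sigma_u]]].
by exists u => //; apply/esym: sigma_u.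
Qed.

Section Parity.
Variable X : {set nvert Z}.

(* [parity_edges true p] (resp. [false]) lists the edges of [p] lying in the
   odd-indexed (resp. even-indexed) parts of the partition generated by [X]:
   the flag flips at each tail in [X]. *)
Fixpoint parity_edges (odd_part : bool) p : seq (nedge Z) :=
  if p is e :: p' then
    let b := odd_part (+) (ntail e \in X) in
    if b then e :: parity_edges b p' else parity_edges b p'
  else [::].

Local Notation X_free a := (~~ has (fun e => ntail e \in X) a).

Lemma parity_edges_free_cat c a b :
  X_free a -> parity_edges c (a ++ b) = (if c then a else [::]) ++ parity_edges c b.
Proof.
elim: a => [|e a IHa] /=; first by case: c.
by rewrite negb_or => /andP [/negbTE Ne /IHa IH]; rewrite Ne addbF IH; case: (c).
Qed.

Lemma count_parity_edges (P : pred (nedge Z)) c p :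
  count P (parity_edges c p) + count P (parity_edges (~~ c) p) = count P p.
Proof.
elim: p c => [|e p IHp] c //=; rewrite addNb.
by case: (c (+) _) => /=; [rewrite -addnA IHp | rewrite addnCA IHp].
Qed.

Lemma parity_edges_subset c p : {subset parity_edges c p <= p}.
Proof.
elim: p c => [|e p IHp] c //= f.
rewrite in_cons; case: (c (+) _); last by move/IHp ->; rewrite orbT.
by rewrite in_cons => /orP [->|/IHp ->]; rewrite ?orbT.
Qed.

Lemma parity_edges_part_index c p e :
  e \in parity_edges c p -> exists2 k, onth p k = Some e & odd (part_index X p k) = c.
Proof.
rewrite /part_index; elim: p c => [|f p IHp] c //=.
case Hb: (c (+) (ntail f \in X)); rewrite ?in_cons; first case/orP=> [/eqP ->|].
  by exists 0; rewrite //= take0 addn0 oddb; move: Hb; case: c; case: (_ \in X).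
all: move/IHp=> [k pk odd_k]; exists k.+1; rewrite //= oddD oddb.
all: by move: Hb odd_k => /=; case: c; case: (_ \in X); case: odd.
Qed.

Lemma odd_even_parts_label_free p Ya Yb :
  odd_even_parts X p Ya Yb ->
  label_free Yb (parity_edges true p) /\ label_free Ya (parity_edges false p).
Proof.
move=> oep; split=> e x /parity_edges_part_index [k pk odd_k] lx;
  have [inYa inYb] := oep k e x pk lx; apply/negP.
  by move/inYb; rewrite odd_k.
by move/inYa; rewrite odd_k.
Qed.

Lemma split_at_first_X u v p : walk u v p ->
  exists w a b, [/\ p = a ++ b, walk u w a, walk w v b, X_free a & b = [::] \/ w \in X].
Proof.
elim: p u => [|e p IHp] u /=.
  by move=> Wp; exists u, [::], [::]; split; rewrite /= ?eqxx //; left.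
case/andP=> /eqP Te Wp; case Xu: (u \in X).
  by exists u, [::], (e :: p); split; rewrite /= ?Te ?eqxx ?Wp //; right.
have [w [a [b [-> Wa Wb Na Hb]]]] := IHp _ Wp.
by exists w, (e :: a), b; split=> //=; rewrite ?Te ?eqxx ?Xu.
Qed.

Lemma tails_free_prefix a b y :
  X_free a -> y \in X -> (y \in map ntail (a ++ b)) = (y \in map ntail b).
Proof.
move=> Na Xy; rewrite map_cat mem_cat; case: mapP => //= -[e ea ye].
by move/hasPn: Na => /(_ e ea); rewrite -ye Xy.
Qed.

Lemma first_X_reachable w1 w2 v b1 b2 :
  walk w1 v b1 -> walk w2 v b2 -> b1 = [::] \/ w1 \in X ->
  {in X, forall y, y \in map ntail b1 -> y \in map ntail b2} ->
  exists g, walk w2 w1 g.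
Proof.
move=> W1 W2 Hb1 sub12; apply: (walk_prefix W2); rewrite (walk_verts W2) mem_rcons inE.
case: b1 W1 Hb1 sub12 => [/eqP -> _ _|f b1 /= /andP [/eqP Tf _] [//|Xw1] sub12].
  by rewrite eqxx.
by rewrite sub12 ?orbT //= -Tf mem_head.
Qed.

Lemma first_X_eq w1 w2 v b1 b2 : acyclic ->
  walk w1 v b1 -> walk w2 v b2 -> b1 = [::] \/ w1 \in X -> b2 = [::] \/ w2 \in X ->
  {in X, forall y, (y \in map ntail b1) = (y \in map ntail b2)} -> w1 = w2.
Proof.
move=> acyc W1 W2 Hb1 Hb2 same.
have [g21 W21] : exists g, walk w2 w1 g.
  by apply: first_X_reachable W1 W2 Hb1 _ => y Xy; rewrite same.
have [g12 W12] : exists g, walk w1 w2 g.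
  by apply: first_X_reachable W2 W1 Hb2 _ => y Xy; rewrite same.
by case: g12 W12 (acyc _ _ (walk_trans W12 W21)) => [/eqP|].
Qed.

(* Acyclicity forces both walks to reach the same next vertex of [X] (or [v]),
   so their segments between consecutive vertices of [X] can be interleaved. *)
Lemma splice_walks c u v p1 p2 : acyclic -> walk u v p1 -> walk u v p2 ->
    {in X, forall y, (y \in map ntail p1) = (y \in map ntail p2)} ->
  exists2 p, walk u v p & perm_eq p (parity_edges c p1 ++ parity_edges (~~ c) p2).
Proof.
move=> acyc; have [n] := ubnP (size p1 + size p2).
elim: n c u p1 p2 => // n IHn c u [|e1 q1] [|e2 q2] /= size_lt.
- by move=> W1 _ _; exists [::].
- by move=> /eqP <- W2; have := acyc u (e2 :: q2) W2.
- by move=> W1 /eqP Eu; rewrite -Eu in W1; have := acyc u (e1 :: q1) W1.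
move=> /andP [/eqP T1 W1] /andP [/eqP T2 W2] same.
have [w1 [a1 [b1 [Eq1 Wa1 Wb1 Na1 Hb1]]]] := split_at_first_X W1.
have [w2 [a2 [b2 [Eq2 Wa2 Wb2 Na2 Hb2]]]] := split_at_first_X W2.
subst q1 q2.
have Wea1 : walk u w1 (e1 :: a1) by rewrite /= T1 eqxx.
have Wea2 : walk u w2 (e2 :: a2) by rewrite /= T2 eqxx.
have same_b : {in X, forall y, (y \in map ntail b1) = (y \in map ntail b2)}.
  move=> y Xy; move: (same y Xy); rewrite /= !in_cons !tails_free_prefix // T1 T2.
  case: (eqVneq y u) => [->|_] //= _.
  by rewrite (negbTE (acyclic_tails_notin acyc Wea1 Wb1))
             (negbTE (acyclic_tails_notin acyc Wea2 Wb2)).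
have Ew := first_X_eq acyc Wb1 Wb2 Hb1 Hb2 same_b; subst w2.
have [|p Wp perm_p] := IHn (c (+) (u \in X)) w1 b1 b2 _ Wb1 Wb2 same_b.
  by rewrite !size_cat in size_lt; lia.
rewrite T1 T2 addNb !parity_edges_free_cat //.
case: (c (+) (u \in X)) perm_p => perm_p /=.
  exists (e1 :: a1 ++ p); first exact: walk_trans Wea1 Wp.
  by rewrite perm_cons -catA perm_cat2l.
exists (e2 :: a2 ++ p); first exact: walk_trans Wea2 Wp.
by rewrite perm_sym (perm_catCA _ (e2 :: a2)) /= perm_cons perm_cat2l perm_sym.
Qed.

(* Glue the [c]-parts of [Q] to the [~~ c]-parts of [P]: a variable [x] of [Y]
   is read [d] times on the result and on [P], hence never in the [c]-parts of
   [Q]. *)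
Lemma label_free_parity_transfer d Y c P Q : acyclic -> uniform_read Z d ->
    ss_path P -> ss_path Q ->
    {in X, forall y, (y \in map ntail P) = (y \in map ntail Q)} ->
  label_free Y (parity_edges c P) -> label_free Y (parity_edges c Q).
Proof.
move=> acyc U WP WQ same freeP e x eQ ex; apply/negP => xY.
have [R WR permR] := splice_walks c acyc WQ WP (fun y Xy => esym (same y Xy)).
pose occ (f : nedge Z) := labvar f == Some x.
have := permP permR occ; rewrite count_cat (U _ WR x) -(U _ WP x).
rewrite -(count_parity_edges occ c P) (label_free_count freeP xY) add0n.
rewrite -{1}[count occ (parity_edges (~~ c) P)]add0n => /eqP; rewrite eqn_add2r eq_sym.
by rewrite -leqn0 leqNgt -has_count => /hasPn /(_ e eQ); rewrite /occ ex eqxx.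
Qed.

Definition separated_by (Y1 Y2 : {set V}) c p : Prop :=
  label_free Y2 (parity_edges c p) /\ label_free Y1 (parity_edges (~~ c) p).

Lemma through_X_same_tails p q : nsnk Z \notin X -> ss_path p -> ss_path q ->
    {subset X <= path_verts p} -> {subset X <= path_verts q} ->
  {in X, forall y, (y \in map ntail p) = (y \in map ntail q)}.
Proof.
move=> snk Wp Wq Xp Xq y Xy; have y_snk : y != nsnk Z by apply: contraNneq snk => <-.
by rewrite !ss_path_verts_tails ?Xp ?Xq.
Qed.

Lemma separates_parity_edges d Y1 Y2 :
  is_nbp Z -> uniform_read Z d -> separates X Y1 Y2 ->
  exists c, forall p, ss_path p -> {subset X <= path_verts p} -> separated_by Y1 Y2 c p.
Proof.
move=> /is_nbp_acyclic acyc U [_ _ snk [P [WP _ XP oep]]].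
have [c [free2 free1]] : exists c, separated_by Y1 Y2 c P.
  by case: oep => /odd_even_parts_label_free [? ?]; [exists true | exists false].
exists c => q Wq Xq; have same := through_X_same_tails snk WP Wq XP Xq.
by split; exact: label_free_parity_transfer acyc U WP Wq same _.
Qed.

Lemma hybrid_path Y1 Y2 c (p1 p2 : seq (nedge Z)) : acyclic ->
    nsnk Z \notin X -> ss_path p1 -> ss_path p2 ->
    {subset X <= path_verts p1} -> {subset X <= path_verts p2} ->
    label_free Y2 (parity_edges c p1) -> label_free Y1 (parity_edges (~~ c) p2) ->
  exists2 R : seq (nedge Z), ss_path R & forall x b, (x, b) \in lits R ->
    ((x, b) \in lits p1 /\ x \notin Y2) \/ ((x, b) \in lits p2 /\ x \notin Y1).
Proof.
move=> acyc snk W1 W2 X1 X2 free1 free2.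
have [R WR permR] := splice_walks c acyc W1 W2 (through_X_same_tails snk W1 W2 X1 X2).
exists R => // x b; rewrite inE => /hasP [r rR /eqP lr].
have lx : labvar r = Some x by rewrite /labvar lr.
have lit_of q : r \in q -> (x, b) \in lits q.
  by move=> rq; rewrite inE; apply/hasP; exists r; rewrite ?lr.
move: rR; rewrite (perm_mem permR) mem_cat => /orP [r1|r2]; [left|right].
  by split; [exact/lit_of/(parity_edges_subset r1) | exact: free1 r1 lx].
by split; [exact/lit_of/(parity_edges_subset r2) | exact: free2 r2 lx].
Qed.

End Parity.

Lemma lits_decided (S : {set V * bool}) p x b :
  computational p -> S \subset lits p -> ((x, true) \in S) || ((x, false) \in S) ->
  (x, b) \in lits p -> (x, b) \in S.
Proof.
move/forallP=> /(_ x) Cx Sp Sx.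
by case: b; case/orP: Sx => Sx xb //; move: Cx; rewrite xb (subsetP Sp _ Sx).
Qed.

Lemma computational_mix (Y1 Y2 : {set V}) (S : {set V * bool})
    (p1 p2 R : seq (nedge Z)) :
    computational p1 -> computational p2 -> S \subset lits p1 -> S \subset lits p2 ->
    (forall x, x \notin Y1 -> x \notin Y2 -> ((x, true) \in S) || ((x, false) \in S)) ->
    (forall x b, (x, b) \in lits R ->
       ((x, b) \in lits p1 /\ x \notin Y2) \/ ((x, b) \in lits p2 /\ x \notin Y1)) ->
  computational R.
Proof.
move=> C1 C2 S1 S2 decided orig; apply/forallP => x; apply/negP => /andP [xt xf].
have [p Cp inp] : exists2 p : seq (nedge Z),
    computational p & forall b, (x, b) \in lits R -> (x, b) \in lits p.
  have [x1|nx1] := boolP (x \in Y1).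
    by exists p1 => // b /orig [[]//|[_]]; rewrite x1.
  have [x2|nx2] := boolP (x \in Y2).
    by exists p2 => // b /orig [[_]|[]//]; rewrite x2.
  exists p1 => // b /orig [[]//|[xb _]]; apply: (subsetP S1).
  exact: lits_decided C2 S2 (decided x nx1 nx2) xb.
by move/forallP: Cp => /(_ x); rewrite !inp.
Qed.

End Walks.

Lemma connect_pstep_tverts (V : finType) (H : btbg V) (i : 'I_(ntrees H)) (l u : V) :
  (forall v, v \in tverts i -> v != troot i -> tpar i v \in tverts i) ->
  l \in tverts i -> connect (pstep i) l u -> u \in tverts i.
Proof.
move=> par_in + /connectP [s + ->] => {u}.
elim: s l => [|a s IHs] l //= l_in /andP [/and3P [_ l_nr /eqP ->] /IHs]; apply.
exact: par_in.
Qed.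

Lemma connect_pstep_leaf (V : finType) (H : btbg V) (i : 'I_(ntrees H)) (l u : V) :
  connect (pstep i) l u -> leaf i u -> u = l.
Proof.
move=> /connectP [s]; case/lastP: s => [//|s a].
rewrite rcons_path last_rcons => /andP [_ /and3P [s_in s_nr /eqP ->]] -> {a}.
case/andP=> _ /eqP no_child.
have : last l s \in children i (tpar i (last l s)) by rewrite inE in_setD1 s_nr s_in eqxx.
by rewrite no_child inE.
Qed.

Lemma Ppath_root_halfpath (V : finType) (H : btbg V) (i j : 'I_(ntrees H)) (u : V) :
  is_btbg H -> u \in Ppath i j -> u \in Roots H -> u != troot j -> u \in halfpath i j.
Proof.
case=> trees _ _ _ shared; rewrite inE => /orP [//|].
rewrite inE => /existsP [l /and3P [lj li lu]] /imsetP [k _ uk] uj.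
have [[_ par_j _] _] := trees j.
have u_j : u \in tverts j by apply: connect_pstep_tverts par_j _ lu; case/andP: lj.
have kj : k != j by apply: contraNneq uj => kj; rewrite uk kj.
have u_k : u \in tverts k by rewrite uk; case: (trees k) => [[]].
have [_ u_leaf _] := shared k j u kj u_k u_j.
have ul := connect_pstep_leaf lu u_leaf.
by rewrite inE; apply/existsP; exists l; rewrite ul li lj connect0.
Qed.

Section PseudoedgeClauses.
Variables (V : finType) (H : btbg V) (Z : nbp V) (d : nat).
Variables (X : {set nvert Z}) (Y1 Y2 : {set V}).
Variables (M : {set 'I_(ntrees H) * 'I_(ntrees H)}) (S : {set V * bool}).
Hypotheses (btbgH : is_btbg H) (nbpZ : is_nbp Z) (readZ : uniform_read Z d).
Hypotheses (computesZ : computes Z (phiH H)).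
Hypotheses (Y1_roots : Y1 \subset Roots H) (Y2_roots : Y2 \subset Roots H).
Hypotheses (sepX : separates X Y1 Y2) (matchM : pseudomatching_between M Y1 Y2).
Hypothesis assignS : assignment_on S (~: bigcupM M).

Lemma decided_outside x :
  x \notin Y1 -> x \notin Y2 -> ((x, true) \in S) || ((x, false) \in S).
Proof.
move=> x1 x2; have [_ /(_ x)] := assignS; case: ((x, true) \in S) => //= -> //.
rewrite !inE negb_or; apply/andP; split; apply/imsetP => -[e eM xe];
  have /and3P [_ r1 r2] := matchM.1 e eM.
  by rewrite xe r1 in x1.
by rewrite xe r2 in x2.
Qed.

Lemma pseudoedge_halfpath_hit e p1 p2 : e \in M ->
    ss_path p1 -> computational p1 -> {subset X <= path_verts p1} -> S \subset lits p1 ->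
    ss_path p2 -> computational p2 -> {subset X <= path_verts p2} -> S \subset lits p2 ->
  hits p1 (halfpath e.1 e.2) \/ hits p2 (halfpath e.2 e.1).
Proof.
move=> eM W1 C1 X1 S1 W2 C2 X2 S2.
have [_ _ snk _] := sepX.
have [c sep_c] := separates_parity_edges nbpZ readZ sepX.
have [[free1 _] [_ free2]] := (sep_c _ W1 X1, sep_c _ W2 X2).
have [R WR origR] := hybrid_path (is_nbp_acyclic nbpZ) snk W1 W2 X1 X2 free1 free2.
have CR := computational_mix C1 C2 S1 S2 decided_outside origR.
have /and3P [adj r1 r2] := matchM.1 e eM.
have PinH : Ppath e.1 e.2 \in phiH H by apply/imsetP; exists e.
have [u uP uR] := computes_satisfies computesZ WR CR PinH.
have [u1|nu1] := boolP (u \in Y1).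
  case: (origR _ _ uR) => [[up nu2]|[_]]; last by rewrite u1.
  left; exists u => //; apply: Ppath_root_halfpath uP (subsetP Y1_roots _ u1) _ => //.
  by apply: contraNneq nu2 => ->.
have [u2|nu2] := boolP (u \in Y2).
  case: (origR _ _ uR) => [[_]|[up _]]; first by rewrite u2.
  right; exists u => //; apply: Ppath_root_halfpath _ (subsetP Y2_roots _ u2) _ => //.
    by rewrite /Ppath setUC.
  by apply: contraNneq nu1 => ->.
have uS : (u, true) \in S.
  have dec_u := decided_outside nu1 nu2.
  by case: (origR _ _ uR) => -[up _]; [exact: lits_decided C1 S1 dec_u up |
                                        exact: lits_decided C2 S2 dec_u up].
move: uP; rewrite inE => /orP [uh|uh]; [left|right]; exists u => //.
  exact: (subsetP S1).
exact: (subsetP S2).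
Qed.

End PseudoedgeClauses.

Theorem lemma7 (V : finType) (H : btbg V) (Z : nbp V) (d : nat)
    (X : {set nvert Z}) (Y1 Y2 : {set V})
    (M : {set 'I_(ntrees H) * 'I_(ntrees H)}) (S : {set V * bool}) :
  is_btbg H -> is_nbp Z -> uniform_read Z d -> computes Z (phiH H) ->
  Y1 \subset Roots H -> Y2 \subset Roots H ->
  separates X Y1 Y2 ->
  pseudomatching_between M Y1 Y2 ->
  assignment_on S (~: bigcupM M) ->
  exists2 phi, phi \in CNFM M &
    forall p, ss_path p -> computational p -> {subset X <= path_verts p} ->
      S \subset lits p -> satisfies (lits p) phi.
Proof.
move=> btbgH nbpZ readZ computesZ Y1_roots Y2_roots sepX matchM assignS.
pose forced (e : 'I_(ntrees H) * 'I_(ntrees H)) (b : bool) :=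
  forall p, ss_path p -> computational p -> {subset X <= path_verts p} ->
    S \subset lits p -> hits p (if b then halfpath e.1 e.2 else halfpath e.2 e.1).
pose c := [ffun e => if excluded_middle_informative (forced e true) then true else false].
have forced_c e : e \in M -> forced e (c e).
  rewrite ffunE; case: excluded_middle_informative => //= not_forced eM p2 W2 C2 X2 S2.
  apply: NNPP => miss2; apply: not_forced => p1 W1 C1 X1 S1.
  by case: (pseudoedge_halfpath_hit btbgH nbpZ readZ computesZ Y1_roots Y2_roots sepX
    matchM assignS eM W1 C1 X1 S1 W2 C2 X2 S2) => // /miss2.
exists [set (if c e then halfpath e.1 e.2 else halfpath e.2 e.1) | e in M].
  by rewrite inE; apply/existsP; exists c.
by move=> p Wp Cp Xp Sp C /imsetP [e eM ->]; exact: forced_c.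
Qed.
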